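(* Let $r>0$, $\alpha\in(0,1]$, $K>0$, $\delta>0$, $\sigma>0$, and consider the system \[ \dot p = rm\Big(1-\frac{p+m}{K}\Big)-\delta p,\qquad \dot m=\alpha r p\Big(1-\frac{p+m}{K}\Big)-\sigma m \] on $\Omega=\{(p,m)\in\mathbb{R}^2:\ p\ge0,\ m\ge0,\ p+m\le K\}$. If $R_0=r\sqrt{\alpha/(\delta\sigma)}\le 1$, then the equilibrium $E_0=(0,0)$ is globally asymptotically stable in $\Omega$. *)

From Stdlib Require Import Reals.
Open Scope R_scope.

Definition fp (r K delta : R) (p m : R) : R := r * m * (1 - (p + m) / K) - delta * p.
Definition gm (r alpha K sigma : R) (p m : R) : R :=
  alpha * r * p * (1 - (p + m) / K) - sigma * m.

Definition Omega (K p m : R) : Prop := 0 <= p /\ 0 <= m /\ p + m <= K.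

Definition repro_num (r alpha delta sigma : R) : R := r * sqrt (alpha / (delta * sigma)).

Definition is_solution (r alpha K delta sigma : R) (p m : R -> R) : Prop :=
  forall t, 0 <= t ->
    derivable_pt_lim p t (fp r K delta (p t) (m t)) /\
    derivable_pt_lim m t (gm r alpha K sigma (p t) (m t)).

Definition norm2 (x y : R) : R := sqrt (x ^ 2 + y ^ 2).

Definition GAS_E0_in_Omega (r alpha K delta sigma : R) : Prop :=
  (forall eps, 0 < eps -> exists eta, 0 < eta /\
     forall p m, is_solution r alpha K delta sigma p m ->
       Omega K (p 0) (m 0) -> norm2 (p 0) (m 0) < eta ->
       forall t, 0 <= t -> norm2 (p t) (m t) < eps)
  /\
  (forall p m, is_solution r alpha K delta sigma p m ->
     Omega K (p 0) (m 0) ->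
     forall eps, 0 < eps -> exists T, forall t, T <= t -> norm2 (p t) (m t) < eps).

(* Omega is forward invariant: the sum N of the squared negative parts of p, m and
   K - p - m vanishes at time 0 and satisfies N' <= L N on each compact time interval
   (L depending on a bound for the solution there), so by Gronwall it stays 0.
   On Omega the weighted total V = sigma p + r m satisfies V' <= -c V^2 with c > 0:
   R0 <= 1 means alpha r^2 <= delta sigma, which cancels the growth terms and leaves
   V' <= -((p + m) / K) sigma (delta p + r m).  As V is comparable to the Euclidean norm
   on the closed quadrant, its monotonicity gives stability and its decay attractivity. *)

From Stdlib Require Import Reals Lra Psatz.
Open Scope R_scope.

Lemma derivable_pt_lim_nonpos_le (F F' : R -> R) (a b : R) : a <= b ->
  (forall t, a <= t <= b -> derivable_pt_lim F t (F' t)) ->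
  (forall t, a <= t <= b -> F' t <= 0) -> F b <= F a.
Proof.
  intros hab dF hF'. destruct (Req_dec a b) as [<- | hneq]; [lra |].
  destruct (MVT_cor2 F F' a b ltac:(lra) dF) as [c [Hc hc]].
  assert (F' c <= 0) by (apply hF'; lra). nra.
Qed.

Lemma quadratic_decay (V V' : R -> R) (c : R) : 0 < c ->
  (forall t, 0 <= t -> derivable_pt_lim V t (V' t)) ->
  (forall t, 0 <= t -> V' t <= - c * V t ^ 2) ->
  forall eps, 0 < eps -> exists T, 0 <= T /\ forall t, T <= t -> V t < eps.
Proof.
  intros hc dV hV' eps heps.
  assert (hce : 0 < c * eps ^ 2) by (apply Rmult_lt_0_compat; nra).
  assert (hT : 0 <= Rabs (V 0) / (c * eps ^ 2)).
  { apply Rmult_le_pos; [apply Rabs_pos | left; apply Rinv_0_lt_compat; lra]. }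
  (* While V stays above eps it decreases at speed at least c eps^2. *)
  exists (Rabs (V 0) / (c * eps ^ 2)). split; [exact hT |].
  intros t ht. apply Rnot_le_lt; intros hVt.
  assert (ht0 : 0 <= t) by lra.
  assert (hVs : forall s, 0 <= s <= t -> eps <= V s).
  { intros s hs. apply Rle_trans with (V t); [lra |].
    apply (derivable_pt_lim_nonpos_le V V' s t); [lra | |].
    - intros u hu. apply dV. lra.
    - intros u hu. specialize (hV' u ltac:(lra)). nra. }
  assert (hW : V t + c * eps ^ 2 * t <= V 0 + c * eps ^ 2 * 0).
  { apply (derivable_pt_lim_nonpos_le (fun s => V s + c * eps ^ 2 * s)
      (fun s => V' s + c * eps ^ 2 * 1) 0 t ht0).
    - intros s hs. apply derivable_pt_lim_plus; [apply dV; lra |].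
      apply derivable_pt_lim_scal, derivable_pt_lim_id.
    - intros s hs. specialize (hV' s ltac:(lra)). specialize (hVs s hs).
      assert (eps ^ 2 <= V s ^ 2) by nra. nra. }
  apply (Rmult_le_compat_l (c * eps ^ 2)) in ht; [| lra].
  replace (c * eps ^ 2 * (Rabs (V 0) / (c * eps ^ 2))) with (Rabs (V 0)) in ht by (field; lra).
  pose proof (Rle_abs (V 0)). lra.
Qed.

Lemma gronwall_nonpos (N N' : R -> R) (L T : R) : 0 <= T ->
  (forall t, 0 <= t <= T -> derivable_pt_lim N t (N' t)) ->
  (forall t, 0 <= t <= T -> N' t <= L * N t) ->
  N 0 <= 0 -> N T <= 0.
Proof.
  intros hT dN hN' hN0.
  set (F := fun t => exp (- L * t) * N t).
  assert (dF : forall t, 0 <= t <= T ->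
    derivable_pt_lim F t (exp (- L * t) * (N' t - L * N t))).
  { intros t ht.
    assert (dE : derivable_pt_lim (fun u => exp (- L * u)) t (exp (- L * t) * - L)).
    { replace (exp (- L * t) * - L) with (exp (- L * t) * (- L * 1)) by ring.
      apply (derivable_pt_lim_comp (fun u => - L * u) exp).
      - apply derivable_pt_lim_scal, derivable_pt_lim_id.
      - apply derivable_pt_lim_exp. }
    replace (exp (- L * t) * (N' t - L * N t))
      with (exp (- L * t) * - L * N t + exp (- L * t) * N' t) by ring.
    apply (derivable_pt_lim_mult (fun u => exp (- L * u)) N); auto. }
  assert (hF : F T <= F 0).
  { apply (derivable_pt_lim_nonpos_le F _ 0 T hT dF).
    intros t ht. pose proof (exp_pos (- L * t)). specialize (hN' t ht). nra. }
  unfold F in hF. rewrite Rmult_0_r, exp_0, Rmult_1_l in hF.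
  pose proof (exp_pos (- L * T)). nra.
Qed.

Definition neg_sq (x : R) : R := Rmin x 0 ^ 2.

Lemma neg_sq_ge0 x : 0 <= neg_sq x.
Proof. apply pow2_ge_0. Qed.

Lemma neg_sq_eq0 x : 0 <= x -> neg_sq x = 0.
Proof. intros hx. unfold neg_sq, Rmin. destruct (Rle_dec x 0); [replace x with 0 by lra |]; ring. Qed.

Lemma neg_sq_le0 x : neg_sq x <= 0 -> 0 <= x.
Proof. unfold neg_sq, Rmin. destruct (Rle_dec x 0); nra. Qed.

Lemma derivable_pt_lim_neg_sq x : derivable_pt_lim neg_sq x (2 * Rmin x 0).
Proof.
  intros e he. exists (mkposreal e he). intros h h0 hh; simpl in hh.
  assert (hrem : Rabs (neg_sq (x + h) - neg_sq x - 2 * Rmin x 0 * h) <= h ^ 2).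
  { unfold neg_sq, Rmin. apply Rabs_le.
    destruct (Rle_dec (x + h) 0), (Rle_dec x 0); split; nra. }
  replace ((neg_sq (x + h) - neg_sq x) / h - 2 * Rmin x 0)
    with ((neg_sq (x + h) - neg_sq x - 2 * Rmin x 0 * h) / h) by (field; auto).
  pose proof (Rabs_pos_lt h h0).
  unfold Rdiv. rewrite Rabs_mult, Rabs_inv.
  apply Rle_lt_trans with (h ^ 2 * / Rabs h).
  - apply Rmult_le_compat_r; [left; apply Rinv_0_lt_compat |]; lra.
  - rewrite <- (pow2_abs h). field_simplify; lra.
Qed.

Lemma derivable_pt_lim_neg_sq_comp (u : R -> R) x l : derivable_pt_lim u x l ->
  derivable_pt_lim (fun s => neg_sq (u s)) x (2 * Rmin (u x) 0 * l).
Proof. intros du. apply (derivable_pt_lim_comp u neg_sq); [exact du | apply derivable_pt_lim_neg_sq]. Qed.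

Lemma Rabs_le_between x B : Rabs x <= B -> - B <= x <= B.
Proof. unfold Rabs; destruct (Rcase_abs x); lra. Qed.

Lemma nonpos_mul_le_Rmin0 (x y z By Bz : R) : x <= 0 -> Rabs y <= By -> Rabs z <= Bz ->
  x * y * z <= x * (Bz * Rmin y 0 + By * Rmin z 0).
Proof.
  intros hx hy hz. apply Rabs_le_between in hy. apply Rabs_le_between in hz.
  unfold Rmin; destruct (Rle_dec y 0), (Rle_dec z 0).
  - assert (0 <= x * y) by nra. assert (0 <= x * z) by nra. nra.
  - assert (0 <= x * y) by nra. nra.
  - assert (0 <= x * z) by nra. nra.
  - assert (x * y <= 0) by nra. nra.
Qed.

Lemma Rmin0_mul x : Rmin x 0 * x = Rmin x 0 ^ 2.
Proof. unfold Rmin; destruct (Rle_dec x 0); ring. Qed.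

Lemma Rmin0_le x : Rmin x 0 <= x /\ Rmin x 0 <= 0.
Proof. unfold Rmin; destruct (Rle_dec x 0); lra. Qed.

Lemma weighted_products_le_sum_sq (k1 k2 k3 k4 a b c : R) :
  0 <= k1 -> 0 <= k2 -> 0 <= k3 -> 0 <= k4 ->
  k1 * (a * b) + k2 * (a * c) + k3 * (b * c) + k4 * c ^ 2
  <= (k1 + k2 + k3 + k4) * (a ^ 2 + b ^ 2 + c ^ 2).
Proof.
  intros h1 h2 h3 h4.
  assert (a * b <= a ^ 2 + b ^ 2 + c ^ 2) by nra.
  assert (a * c <= a ^ 2 + b ^ 2 + c ^ 2) by nra.
  assert (b * c <= a ^ 2 + b ^ 2 + c ^ 2) by nra.
  assert (c ^ 2 <= a ^ 2 + b ^ 2 + c ^ 2) by nra.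
  nra.
Qed.

Definition neg_energy (K p m : R) : R := neg_sq p + neg_sq m + neg_sq (K - p - m).

Definition neg_energy_rate (r alpha K delta sigma p m : R) : R :=
  2 * Rmin p 0 * fp r K delta p m + 2 * Rmin m 0 * gm r alpha K sigma p m
  - 2 * Rmin (K - p - m) 0 * (fp r K delta p m + gm r alpha K sigma p m).

Lemma neg_energy_rate_le r alpha K delta sigma B p m :
  0 < r -> 0 < alpha -> 0 < K -> 0 < delta -> 0 < sigma -> Rabs p <= B -> Rabs m <= B ->
  neg_energy_rate r alpha K delta sigma p m
  <= 2 * ((1 + alpha) * r * (K + 4 * B) / K + delta + sigma) * neg_energy K p m.
Proof.
  intros hr ha hK hd hs hp hm.
  assert (hB : 0 <= B) by (pose proof (Rabs_pos p); lra).
  set (q := K - p - m).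
  assert (hq : Rabs q <= K + 2 * B).
  { apply Rabs_le_between in hp; apply Rabs_le_between in hm. apply Rabs_le. unfold q; lra. }
  unfold neg_energy_rate, neg_energy, neg_sq, fp, gm. fold q.
  set (a := Rmin p 0). set (b := Rmin m 0). set (c := Rmin q 0).
  destruct (Rmin0_le p) as [ap a0]. destruct (Rmin0_le m) as [bm b0].
  destruct (Rmin0_le q) as [cq c0].
  pose proof (Rmin0_mul p) as Ea. pose proof (Rmin0_mul m) as Eb. pose proof (Rmin0_mul q) as Ec.
  fold a b c in ap, a0, bm, b0, cq, c0, Ea, Eb, Ec.
  set (u := r / K). set (w := alpha * r / K).
  assert (hu : 0 < u) by (apply Rdiv_lt_0_compat; lra).
  assert (hw : 0 < w) by (apply Rdiv_lt_0_compat; nra).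
  replace (1 - (p + m) / K) with (q / K) by (unfold q; field; lra).
  replace (r * m * (q / K)) with (u * (m * q)) by (unfold u; field; lra).
  replace (alpha * r * p * (q / K)) with (w * (p * q)) by (unfold w; field; lra).
  replace ((1 + alpha) * r * (K + 4 * B) / K) with ((u + w) * (K + 4 * B)) by (unfold u, w; field; lra).
  pose proof (nonpos_mul_le_Rmin0 a m q B (K + 2 * B) a0 hm hq) as Amq.
  pose proof (nonpos_mul_le_Rmin0 b p q B (K + 2 * B) b0 hp hq) as Bpq.
  fold b c in Amq. fold a c in Bpq.
  assert (T1 : a * (u * (m * q) - delta * p) <= u * ((K + 2 * B) * (a * b) + B * (a * c))) by nra.
  assert (T2 : b * (w * (p * q) - sigma * m) <= w * ((K + 2 * B) * (a * b) + B * (b * c))) by nra.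
  assert (T3 : - c * (u * (m * q) - delta * p + (w * (p * q) - sigma * m))
               <= (u + w) * B * c ^ 2 + delta * (a * c) + sigma * (b * c)).
  { assert (-(u * m + w * p) <= (u + w) * B).
    { apply Rabs_le_between in hp; apply Rabs_le_between in hm. nra. }
    assert (c * p <= a * c) by nra. assert (c * m <= b * c) by nra.
    replace (- c * (u * (m * q) - delta * p + (w * (p * q) - sigma * m)))
      with (-(u * m + w * p) * (c * q) + delta * (c * p) + sigma * (c * m)) by ring.
    rewrite Ec.
    assert (-(u * m + w * p) * c ^ 2 <= (u + w) * B * c ^ 2)
      by (apply Rmult_le_compat_r; [apply pow2_ge_0 | lra]).
    nra. }
  pose proof (weighted_products_le_sum_sq ((u + w) * (K + 2 * B)) (u * B + delta)
    (w * B + sigma) ((u + w) * B) a b c) as hsum.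
  assert (0 <= (u + w) * (K + 2 * B)) by nra.
  assert (0 <= u * B) by nra. assert (0 <= w * B) by nra.
  lra.
Qed.

Lemma derivable_pt_lim_neg_energy r alpha K delta sigma p m t :
  is_solution r alpha K delta sigma p m -> 0 <= t ->
  derivable_pt_lim (fun s => neg_energy K (p s) (m s)) t
    (neg_energy_rate r alpha K delta sigma (p t) (m t)).
Proof.
  intros hsol ht. destruct (hsol t ht) as [dp dm].
  set (f := fp r K delta (p t) (m t)). set (g := gm r alpha K sigma (p t) (m t)).
  assert (dq : derivable_pt_lim (fun s => K - p s - m s) t (- f - g)).
  { replace (- f - g) with (0 - f - g) by ring.
    apply (derivable_pt_lim_minus (fun s => K - p s) m); [| exact dm].
    apply (derivable_pt_lim_minus (fun _ => K) p); [apply derivable_pt_lim_const | exact dp]. }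
  unfold neg_energy, neg_energy_rate. fold f g.
  replace (2 * Rmin (p t) 0 * f + 2 * Rmin (m t) 0 * g - 2 * Rmin (K - p t - m t) 0 * (f + g))
    with (2 * Rmin (p t) 0 * f + 2 * Rmin (m t) 0 * g + 2 * Rmin (K - p t - m t) 0 * (- f - g))
    by ring.
  apply (derivable_pt_lim_plus (fun s => neg_sq (p s) + neg_sq (m s))
                               (fun s => neg_sq (K - p s - m s)));
    [apply (derivable_pt_lim_plus (fun s => neg_sq (p s)) (fun s => neg_sq (m s))) |].
  - exact (derivable_pt_lim_neg_sq_comp p t _ dp).
  - exact (derivable_pt_lim_neg_sq_comp m t _ dm).
  - exact (derivable_pt_lim_neg_sq_comp (fun s => K - p s - m s) t _ dq).
Qed.

Lemma Omega_forward_invariant r alpha K delta sigma p m :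
  0 < r -> 0 < alpha -> 0 < K -> 0 < delta -> 0 < sigma ->
  is_solution r alpha K delta sigma p m -> Omega K (p 0) (m 0) ->
  forall t, 0 <= t -> Omega K (p t) (m t).
Proof.
  intros hr ha hK hd hs hsol [hp0 [hm0 hpm0]] t ht.
  destruct (continuity_ab_maj (fun s => Rabs (p s) + Rabs (m s)) 0 t ht) as [tmax [hmax _]].
  { intros s hs'. destruct (hsol s ltac:(lra)) as [dp dm].
    apply (continuity_pt_plus (fun s => Rabs (p s)) (fun s => Rabs (m s)));
      apply (continuity_pt_comp _ Rabs), Rcontinuity_abs;
      apply derivable_continuous_pt; eexists; eassumption. }
  set (B := Rabs (p tmax) + Rabs (m tmax)) in hmax.
  assert (hNt : neg_energy K (p t) (m t) <= 0).
  { apply (gronwall_nonpos (fun s => neg_energy K (p s) (m s))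
      (fun s => neg_energy_rate r alpha K delta sigma (p s) (m s))
      (2 * ((1 + alpha) * r * (K + 4 * B) / K + delta + sigma)) t ht).
    - intros s hs'. apply derivable_pt_lim_neg_energy; [exact hsol | lra].
    - intros s hs'. specialize (hmax s hs').
      pose proof (Rabs_pos (p s)). pose proof (Rabs_pos (m s)).
      apply neg_energy_rate_le; auto; lra.
    - unfold neg_energy. rewrite !neg_sq_eq0; lra. }
  unfold neg_energy in hNt.
  pose proof (neg_sq_ge0 (p t)). pose proof (neg_sq_ge0 (m t)).
  pose proof (neg_sq_ge0 (K - p t - m t)).
  assert (0 <= p t) by (apply neg_sq_le0; lra).
  assert (0 <= m t) by (apply neg_sq_le0; lra).
  assert (0 <= K - p t - m t) by (apply neg_sq_le0; lra).
  unfold Omega; lra.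
Qed.

Lemma norm2_le_sum x y : 0 <= x -> 0 <= y -> norm2 x y <= x + y.
Proof.
  intros hx hy. unfold norm2. rewrite <- (sqrt_pow2 (x + y)) by lra.
  apply sqrt_le_1_alt. nra.
Qed.

Lemma Rabs_le_norm2 x y : Rabs x <= norm2 x y.
Proof.
  unfold norm2. rewrite <- sqrt_Rsqr_abs. apply sqrt_le_1_alt.
  unfold Rsqr. pose proof (pow2_ge_0 y). lra.
Qed.

Lemma sum_le_2norm2 x y : x + y <= 2 * norm2 x y.
Proof.
  pose proof (Rabs_le_norm2 x y) as hx. pose proof (Rabs_le_norm2 y x) as hy.
  unfold norm2 in *. rewrite Rplus_comm in hy.
  pose proof (Rle_abs x). pose proof (Rle_abs y). lra.
Qed.

Lemma repro_num_le1 r alpha delta sigma :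
  0 < r -> 0 < alpha -> 0 < delta -> 0 < sigma ->
  repro_num r alpha delta sigma <= 1 -> alpha * r ^ 2 <= delta * sigma.
Proof.
  intros hr ha hd hs hR. unfold repro_num in hR.
  assert (hds : 0 < delta * sigma) by nra.
  assert (hq : 0 <= alpha / (delta * sigma)) by (left; apply Rdiv_lt_0_compat; lra).
  assert (hsq : (r * sqrt (alpha / (delta * sigma))) ^ 2 <= 1).
  { assert (0 <= r * sqrt (alpha / (delta * sigma)))
      by (apply Rmult_le_pos; [lra | apply sqrt_pos]).
    nra. }
  rewrite Rpow_mult_distr, pow2_sqrt in hsq by exact hq.
  apply (Rmult_le_compat_r (delta * sigma)) in hsq; [| lra].
  replace (r ^ 2 * (alpha / (delta * sigma)) * (delta * sigma)) with (alpha * r ^ 2) in hsq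
    by (field; lra).
  lra.
Qed.

Definition lyapunov (r sigma p m : R) : R := sigma * p + r * m.

Definition lyapunov_rate (r alpha K delta sigma p m : R) : R :=
  sigma * fp r K delta p m + r * gm r alpha K sigma p m.

Definition decay_rate (r K delta sigma : R) : R :=
  delta * sigma / ((delta + sigma) * (sigma + r) * K).

Lemma decay_rate_pos r K delta sigma : 0 < r -> 0 < K -> 0 < delta -> 0 < sigma ->
  0 < decay_rate r K delta sigma.
Proof.
  intros. unfold decay_rate.
  apply Rdiv_lt_0_compat; repeat apply Rmult_lt_0_compat; lra.
Qed.

Lemma lyapunov_rate_le r alpha K delta sigma p m :
  0 < r -> 0 < K -> 0 < delta -> 0 < sigma ->
  alpha * r ^ 2 <= delta * sigma -> Omega K p m ->
  lyapunov_rate r alpha K delta sigma p m <= - decay_rate r K delta sigma * lyapunov r sigma p m ^ 2.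
Proof.
  intros hr hK hd hs hR [hp [hm hpm]]. unfold lyapunov_rate, decay_rate, fp, gm.
  set (V := lyapunov r sigma p m).
  set (x := (p + m) / K).
  assert (hx : 0 <= x <= 1).
  { unfold x; split; [apply Rmult_le_pos; [lra | left; apply Rinv_0_lt_compat; lra] |].
    apply (Rmult_le_reg_r K); [lra |]. unfold Rdiv. rewrite Rmult_assoc, Rinv_l; lra. }
  assert (hrate : sigma * (r * m * (1 - x) - delta * p) + r * (alpha * r * p * (1 - x) - sigma * m)
                  <= - x * (sigma * (delta * p + r * m))).
  { assert (p * (alpha * r ^ 2 * (1 - x)) <= p * (delta * sigma * (1 - x))).
    { apply Rmult_le_compat_l; [lra |]. apply Rmult_le_compat_r; lra. }
    nra. }
  assert (hV : 0 <= V) by (unfold V, lyapunov; nra).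
  assert (hV1 : V <= (sigma + r) * (p + m)) by (unfold V, lyapunov; nra).
  assert (hV2 : delta * sigma * V <= (delta + sigma) * (sigma * (delta * p + r * m))).
  { unfold V, lyapunov.
    assert (0 <= delta * delta * sigma * p) by (repeat apply Rmult_le_pos; lra).
    assert (0 <= sigma * sigma * r * m) by (repeat apply Rmult_le_pos; lra). nra. }
  assert (hV12 : V * (delta * sigma * V)
                 <= (sigma + r) * (p + m) * ((delta + sigma) * (sigma * (delta * p + r * m)))).
  { apply Rmult_le_compat; [exact hV | apply Rmult_le_pos; nra | exact hV1 | exact hV2]. }
  assert (hden : 0 < (delta + sigma) * (sigma + r) * K) by (apply Rmult_lt_0_compat; nra).
  assert (delta * sigma / ((delta + sigma) * (sigma + r) * K) * V ^ 2
          <= x * (sigma * (delta * p + r * m))).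
  { apply (Rmult_le_reg_l ((delta + sigma) * (sigma + r) * K)); [exact hden |].
    replace ((delta + sigma) * (sigma + r) * K
             * (delta * sigma / ((delta + sigma) * (sigma + r) * K) * V ^ 2))
      with (V * (delta * sigma * V)) by (field; lra).
    replace ((delta + sigma) * (sigma + r) * K * (x * (sigma * (delta * p + r * m))))
      with ((sigma + r) * (p + m) * ((delta + sigma) * (sigma * (delta * p + r * m))))
      by (unfold x; field; lra).
    exact hV12. }
  lra.
Qed.

Lemma lyapunov_norm2_bounds r sigma x y : 0 < r -> 0 < sigma -> 0 <= x -> 0 <= y ->
  Rmin sigma r * norm2 x y <= lyapunov r sigma x y <= 2 * (sigma + r) * norm2 x y.
Proof.
  intros hr hs hx hy. unfold lyapunov.
  pose proof (norm2_le_sum x y hx hy). pose proof (sum_le_2norm2 x y).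
  pose proof (Rmin_l sigma r). pose proof (Rmin_r sigma r).
  assert (0 < Rmin sigma r) by (apply Rmin_glb_lt; lra).
  split; nra.
Qed.

Lemma derivable_pt_lim_lyapunov r alpha K delta sigma p m t :
  is_solution r alpha K delta sigma p m -> 0 <= t ->
  derivable_pt_lim (fun s => lyapunov r sigma (p s) (m s)) t
    (lyapunov_rate r alpha K delta sigma (p t) (m t)).
Proof.
  intros hsol ht. destruct (hsol t ht) as [dp dm].
  apply (derivable_pt_lim_plus (fun s => sigma * p s) (fun s => r * m s));
    apply derivable_pt_lim_scal; assumption.
Qed.

Section Dissipation.

Variables (r alpha K delta sigma : R) (p m : R -> R).
Hypotheses (hr : 0 < r) (ha : 0 < alpha) (hK : 0 < K) (hd : 0 < delta) (hs : 0 < sigma)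
  (hR : alpha * r ^ 2 <= delta * sigma)
  (hsol : is_solution r alpha K delta sigma p m) (h0 : Omega K (p 0) (m 0)).

Lemma norm2_le_lyapunov_along t : 0 <= t ->
  Rmin sigma r * norm2 (p t) (m t) <= lyapunov r sigma (p t) (m t).
Proof.
  intros ht.
  destruct (Omega_forward_invariant r alpha K delta sigma p m hr ha hK hd hs hsol h0 t ht) as [hp [hm _]].
  apply lyapunov_norm2_bounds; assumption.
Qed.

Lemma lyapunov_rate_along t : 0 <= t ->
  lyapunov_rate r alpha K delta sigma (p t) (m t)
  <= - decay_rate r K delta sigma * lyapunov r sigma (p t) (m t) ^ 2.
Proof.
  intros ht. apply lyapunov_rate_le; try assumption.
  exact (Omega_forward_invariant r alpha K delta sigma p m hr ha hK hd hs hsol h0 t ht).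
Qed.

Lemma lyapunov_nonincreasing t : 0 <= t ->
  lyapunov r sigma (p t) (m t) <= lyapunov r sigma (p 0) (m 0).
Proof.
  intros ht.
  apply (derivable_pt_lim_nonpos_le (fun s => lyapunov r sigma (p s) (m s))
    (fun s => lyapunov_rate r alpha K delta sigma (p s) (m s)) 0 t ht).
  - intros s hs'. apply derivable_pt_lim_lyapunov; [exact hsol | lra].
  - intros s hs'. eapply Rle_trans; [apply lyapunov_rate_along; lra |].
    pose proof (decay_rate_pos r K delta sigma hr hK hd hs).
    pose proof (pow2_ge_0 (lyapunov r sigma (p s) (m s))). nra.
Qed.

Lemma lyapunov_vanishes eps : 0 < eps ->
  exists T, 0 <= T /\ forall t, T <= t -> lyapunov r sigma (p t) (m t) < eps.
Proof.
  apply (quadratic_decay (fun s => lyapunov r sigma (p s) (m s))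
    (fun s => lyapunov_rate r alpha K delta sigma (p s) (m s)) (decay_rate r K delta sigma)).
  - exact (decay_rate_pos r K delta sigma hr hK hd hs).
  - intros t ht. apply derivable_pt_lim_lyapunov; assumption.
  - exact lyapunov_rate_along.
Qed.

End Dissipation.

Theorem mainTheorem3 (r alpha K delta sigma : R) :
  0 < r -> 0 < alpha -> alpha <= 1 -> 0 < K -> 0 < delta -> 0 < sigma ->
  repro_num r alpha delta sigma <= 1 ->
  GAS_E0_in_Omega r alpha K delta sigma.
Proof.
  intros hr ha _ hK hd hs hR0.
  pose proof (repro_num_le1 r alpha delta sigma hr ha hd hs hR0) as hR.
  set (k := Rmin sigma r).
  assert (hk : 0 < k) by (apply Rmin_glb_lt; lra).
  split.
  - intros eps heps. exists (k * eps / (2 * (sigma + r))).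
    split; [apply Rdiv_lt_0_compat; nra |].
    intros p m hsol h0 hn0 t ht.
    pose proof (norm2_le_lyapunov_along r alpha K delta sigma p m hr ha hK hd hs hsol h0 t ht)
      as hnorm.
    pose proof (lyapunov_nonincreasing r alpha K delta sigma p m hr ha hK hd hs hR hsol h0 t ht).
    destruct h0 as [hp0 [hm0 _]].
    pose proof (lyapunov_norm2_bounds r sigma (p 0) (m 0) hr hs hp0 hm0) as [_ hV0].
    apply (Rmult_lt_compat_l (2 * (sigma + r))) in hn0; [| lra].
    replace (2 * (sigma + r) * (k * eps / (2 * (sigma + r)))) with (k * eps) in hn0 by (field; lra).
    fold k in hnorm. apply (Rmult_lt_reg_l k); lra.
  - intros p m hsol h0 eps heps.
    destruct (lyapunov_vanishes r alpha K delta sigma p m hr ha hK hd hs hR hsol h0 (k * eps))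
      as [T [hT hV]]; [nra |].
    exists T. intros t ht. specialize (hV t ht).
    pose proof (norm2_le_lyapunov_along r alpha K delta sigma p m hr ha hK hd hs hsol h0 t
      ltac:(lra)) as hnorm.
    fold k in hnorm. apply (Rmult_lt_reg_l k); lra.
Qed.
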